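(* Let $\mathcal{X}=\langle P,K,V\rangle$ be a polyhedral model. Every simplicial bisimulation $\sim\subseteq P\times P$ is included in logical equivalence: if $x\sim y$ then for every SLCS formula $\phi$, $\mathcal{X},x\models\phi\iff\mathcal{X},y\models\phi$.
   Context: A $d$-simplex $\sigma\subseteq\mathbb{R}^m$ is the convex hull of $d+1$ affinely independent points $v_0,\dots,v_d$ (its vertices); the simplexes spanned by subsets of the vertices (including the empty simplex) are its faces, and $\tau\preceq\sigma$ means $\tau$ is a face of $\sigma$. The relative interior of $\sigma$ is $\tilde\sigma=\{\sum_i\lambda_iv_i:\lambda_i\in(0,1],\sum_i\lambda_i=1\}$. A simplicial complex $K$ is a finite set of simplexes of $\mathbb{R}^m$ closed under taking faces and such that the intersection of any two of its simplexes is a face of both. Its polyhedron is $|K|=\bigcup K$, with the subspace topology of $\mathbb{R}^m$; $\mathcal{C}$ and $\mathcal{I}$ denote closure and interior in this space. The cells of $K$ are the sets $\tilde\sigma$ for nonempty $\sigma\in K$; they form a partition $\tilde K$ of $|K|$. A path in a space $P$ is a continuous $\pi:[0,1]\to P$; $\pi(S)=\{\pi(s):s\in S\}$. Fix a finite set $AP$ of atomic propositions. A polyhedral model is $\mathcal{X}=\langle P,K,V\rangle$ with $K$ a simplicial complex, $P=|K|$, and $V:AP\to\mathcal{P}(P)$ such that each $V(p)$ is a union of cells of $K$ ($K$ is then called coherent with the model). SLCS formulas: $\phi::=\top\mid p\mid\neg\phi\mid\phi\wedge\phi\mid\Box\phi\mid\gamma(\phi,\phi)$, $p\in AP$. Semantics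 at $x\in P$, with $[\![\phi]\!]=\{x\in P:\mathcal{X},x\models\phi\}$: $\top$ always holds; $x\models p$ iff $x\in V(p)$; Boolean connectives as usual; $x\models\Box\phi$ iff $x\in\mathcal{I}([\![\phi]\!])$; $x\models\gamma(\phi,\psi)$ iff there is a path $\pi$ in $P$ with $\pi(0)=x$, $\pi((0,1))\subseteq[\![\phi]\!]$ and $\pi(1)\in[\![\psi]\!]$. A path $\pi$ is simplicial (w.r.t. $K$) if there are $s_0=0<s_1<\dots<s_k=1$ and cells $\tilde\sigma_1,\dots,\tilde\sigma_k$ of $K$ with $\pi((s_{i-1},s_i))\subseteq\tilde\sigma_i$ for all $i$. For $R\subseteq P\times P$, paths satisfy $\pi_1\hat R\pi_2$ iff $\pi_1(t)\,R\,\pi_2(t)$ for all $t\in[0,1]$. A relation $\sim\subseteq P\times P$ is a simplicial bisimulation if whenever $x\sim y$: (1) for all $p\in AP$, $x\in V(p)\iff y\in V(p)$; (2) for every simplicial path $\pi_x$ with $\pi_x(0)=x$ there is a simplicial path $\pi_y$ with $\pi_y(0)=y$ and $\pi_x\hat\sim\pi_y$; (3) for every simplicial path $\pi_y$ with $\pi_y(0)=y$ there is a simplicial path $\pi_x$ with $\pi_x(0)=x$ and $\pi_x\hat\sim\pi_y$. *)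

From Stdlib Require Import Reals List.
From mathcomp Require Import ssreflect ssrbool eqtype fintype.
Import ListNotations.
Set Implicit Arguments.
Local Open Scope R_scope.

Section Polyhedra.
Variable m : nat.

Definition Point := 'I_m -> R.

Definition close (x y : Point) (eps : R) : Prop :=
  forall j : 'I_m, Rabs (x j - y j) < eps.

Definition simplex := list Point.

Fixpoint comb (lam : nat -> R) (vs : simplex) : Point :=
  match vs with
  | [] => fun _ => 0
  | v :: vs' => fun j => lam 0%nat * v j + comb (fun i => lam (S i)) vs' j
  end.

Fixpoint sum_first (lam : nat -> R) (n : nat) : R :=
  match n with
  | O => 0
  | S n' => sum_first lam n' + lam n'
  end.

Definition aff_indep (vs : simplex) : Prop :=
  forall lam : nat -> R,
    sum_first lam (length vs) = 0 ->
    (forall j, comb lam vs j = 0) ->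
    forall i, (lt i (length vs)) -> lam i = 0.

Definition hull (vs : simplex) (x : Point) : Prop :=
  exists lam : nat -> R,
    (forall i, (lt i (length vs)) -> 0 <= lam i) /\
    sum_first lam (length vs) = 1 /\
    (forall j, x j = comb lam vs j).

Definition relint (vs : simplex) (x : Point) : Prop :=
  exists lam : nat -> R,
    (forall i, (lt i (length vs)) -> 0 < lam i /\ lam i <= 1) /\
    sum_first lam (length vs) = 1 /\
    (forall j, x j = comb lam vs j).

Definition face (tau sigma : simplex) : Prop := incl tau sigma.

Definition simplicial_complex (K : list simplex) : Prop :=
  (forall s, In s K -> aff_indep s) /\
  (forall s tau, In s K -> face tau s ->
     exists tau', In tau' K /\ incl tau tau' /\ incl tau' tau) /\
  (forall s1 s2, In s1 K -> In s2 K ->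
     exists tau, face tau s1 /\ face tau s2 /\
       (forall x, (hull s1 x /\ hull s2 x) <-> hull tau x)).

Definition polyhedron (K : list simplex) (x : Point) : Prop :=
  exists s, In s K /\ hull s x.

Definition is_cell (K : list simplex) (s : simplex) : Prop :=
  In s K /\ s <> [].

Definition interior (K : list simplex) (S : Point -> Prop) (x : Point) : Prop :=
  polyhedron K x /\
  exists eps, 0 < eps /\ forall y, polyhedron K y -> close y x eps -> S y.

(** Paths in |K|: continuous maps [0,1] -> |K| (values outside [0,1] are irrelevant). *)
Definition is_path (K : list simplex) (pi : R -> Point) : Prop :=
  (forall t, 0 <= t <= 1 -> polyhedron K (pi t)) /\
  (forall t, 0 <= t <= 1 -> forall eps, 0 < eps ->
     exists delta, 0 < delta /\
       forall s, 0 <= s <= 1 -> Rabs (s - t) < delta -> close (pi s) (pi t) eps).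

Definition simplicial_path (K : list simplex) (pi : R -> Point) : Prop :=
  is_path K pi /\
  exists (k : nat) (s : nat -> R) (c : nat -> simplex),
    s 0%nat = 0 /\ s k = 1 /\
    (forall i, (lt i k) -> s i < s (S i)) /\
    (forall i, (lt i k) ->
       is_cell K (c i) /\
       forall t, s i < t < s (S i) -> relint (c i) (pi t)).

Variable AP : finType.

Definition coherent (K : list simplex) (V : AP -> Point -> Prop) : Prop :=
  forall p x, V p x ->
    exists s, is_cell K s /\ relint s x /\ (forall y, relint s y -> V p y).

Inductive form : Type :=
  | FTop : form
  | FAtom : AP -> form
  | FNeg : form -> form
  | FAnd : form -> form -> form
  | FBox : form -> form
  | FGamma : form -> form -> form.

(** Semantics (meaningful at points of |K|). *)
Fixpoint sat (K : list simplex) (V : AP -> Point -> Prop) (x : Point) (phi : form)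
  : Prop :=
  match phi with
  | FTop => True
  | FAtom p => V p x
  | FNeg f => ~ sat K V x f
  | FAnd f g => sat K V x f /\ sat K V x g
  | FBox f => interior K (fun y => sat K V y f) x
  | FGamma f g =>
      exists pi, is_path K pi /\ pi 0 = x /\
        (forall t, 0 < t < 1 -> sat K V (pi t) f) /\
        sat K V (pi 1) g
  end.

Definition simplicial_bisim (K : list simplex) (V : AP -> Point -> Prop)
    (Rel : Point -> Point -> Prop) : Prop :=
  forall x y, Rel x y ->
    (forall p, V p x <-> V p y) /\
    (forall pix, simplicial_path K pix -> pix 0 = x ->
       exists piy, simplicial_path K piy /\ piy 0 = y /\
         forall t, 0 <= t <= 1 -> Rel (pix t) (piy t)) /\
    (forall piy, simplicial_path K piy -> piy 0 = y ->
       exists pix, simplicial_path K pix /\ pix 0 = x /\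
         forall t, 0 <= t <= 1 -> Rel (pix t) (piy t)).

End Polyhedra.

Arguments coherent [m AP] K V.
Arguments simplicial_bisim [m AP] K V Rel.
Arguments FTop {AP}.
Arguments FAtom [AP] _.
Arguments polyhedron [m] K x.
Arguments simplicial_complex [m] K.
Arguments is_path [m] K pi.
Arguments simplicial_path [m] K pi.
Arguments interior [m] K S x.

(** The proof is by
    induction on the formula; atoms and Boolean connectives are immediate,
    and the two modal cases rest on two geometric facts:

    - every formula is constant on each cell of [K] ([formula_cell_invariant]),
      which uses coherence of [V], the star property of polyhedra (near a
      point [p], every cell contains [p] in its closure: [star_nbhd]), and
      the fact that cells meeting a simplex are faces of it ([face_incl]);
    - a [gamma] formula always has a simplicial witness ([gamma_simplicial]),
      obtained by continuous induction along an arbitrary witness.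

    With these, [Box] transfers along the bisimulation by matching a
    straight segment into a violating cell, and [gamma] by matching the
    simplicial witness. *)

From mathcomp Require Import ssreflect ssrbool eqtype seq fintype.
From Stdlib Require Import Reals List Permutation Lra Lia Classical ClassicalEpsilon FunctionalExtensionality.
Import ListNotations.
Local Open Scope R_scope.

Section PolyhedralLogic.
Variable m : nat.
Notation Pt := (Point m).

Definition lin (a : R) (p : Pt) (b : R) (q : Pt) : Pt := fun j => a * p j + b * q j.

(** * Barycentric sums *)

Lemma sum_first_lin a b lam mu n :
  sum_first (fun i => a * lam i + b * mu i) n = a * sum_first lam n + b * sum_first mu n.
Proof. induction n; simpl; [lra|rewrite IHn; ring]. Qed.

Lemma sum_first_S lam n : sum_first lam (S n) = lam 0%nat + sum_first (fun i => lam (S i)) n.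
Proof. induction n; simpl in *; [lra|]. rewrite IHn; simpl; ring. Qed.

Lemma sum_first_ext lam mu n : (forall i, (i < n)%nat -> lam i = mu i) ->
  sum_first lam n = sum_first mu n.
Proof.
  induction n; simpl; intros H; [lra|].
  rewrite IHn; [|intros; apply H; lia]. rewrite H; [lra|lia].
Qed.

Lemma sum_first_0 n : sum_first (fun _ => 0) n = 0.
Proof. induction n; simpl; lra. Qed.

Lemma sum_first_nonneg lam n : (forall i, (i < n)%nat -> 0 <= lam i) -> 0 <= sum_first lam n.
Proof.
  induction n; simpl; intros H; [lra|].
  have := H n ltac:(lia). have := IHn ltac:(intros; apply H; lia). lra.
Qed.

Lemma sum_first_le lam n i : (forall i, (i < n)%nat -> 0 <= lam i) -> (i < n)%nat ->
  lam i <= sum_first lam n.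
Proof.
  induction n; simpl; intros H Hi; [lia|].
  have := sum_first_nonneg lam n ltac:(intros; apply H; lia).
  destruct (Nat.eq_dec i n) as [->|Hne]; [lra|].
  have := IHn ltac:(intros; apply H; lia) ltac:(lia). have := H n ltac:(lia). lra.
Qed.

Lemma sum_first_zero lam n : (forall i, (i < n)%nat -> 0 <= lam i) -> sum_first lam n = 0 ->
  forall i, (i < n)%nat -> lam i = 0.
Proof. intros H H0 i Hi. have := sum_first_le lam n i H Hi. have := H i Hi. lra. Qed.

Lemma comb_lin a b lam mu (vs : simplex m) j :
  comb (fun i => a * lam i + b * mu i) vs j = a * comb lam vs j + b * comb mu vs j.
Proof.
  revert lam mu; induction vs as [|v vs IH]; intros lam mu; simpl; [ring|].
  rewrite (IH (fun i => lam (S i)) (fun i => mu (S i))). ring.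
Qed.

Lemma comb_ext lam mu (vs : simplex m) j : (forall i, (i < length vs)%nat -> lam i = mu i) ->
  comb lam vs j = comb mu vs j.
Proof.
  revert lam mu; induction vs as [|v vs IH]; intros lam mu H; simpl; [ring|].
  rewrite (H 0%nat) /=; [|lia]. rewrite (IH (fun i => lam (S i)) (fun i => mu (S i))); [ring|].
  intros i Hi; apply H; simpl; lia.
Qed.

Lemma comb_zero (vs : simplex m) j : comb (fun _ => 0) vs j = 0.
Proof. induction vs; simpl; [ring|]. rewrite IHvs; ring. Qed.

Lemma comb_scal c lam (vs : simplex m) j : comb (fun i => c * lam i) vs j = c * comb lam vs j.
Proof.
  rewrite (comb_ext _ (fun i => c * lam i + 0 * 0)); [|intros; ring].
  rewrite comb_lin comb_zero. ring.
Qed.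

(** * Simplexes as point sets *)

Lemma hull_ext (s : simplex m) x y : (forall j, x j = y j) -> hull s x -> hull s y.
Proof. intros E [lam [H1 [H2 H3]]]; exists lam; split; [|split]; auto. intros j; rewrite -E; auto. Qed.

Lemma relint_ext (s : simplex m) x y : (forall j, x j = y j) -> relint s x -> relint s y.
Proof. intros E [lam [H1 [H2 H3]]]; exists lam; split; [|split]; auto. intros j; rewrite -E; auto. Qed.

Lemma relint_hull (s : simplex m) x : relint s x -> hull s x.
Proof.
  intros [lam [H1 [H2 H3]]]; exists lam; split; [|split]; auto.
  intros i Hi; have := H1 i Hi; lra.
Qed.

Lemma hull_nil x : ~ hull (m:=m) [] x.
Proof. intros [lam [_ [H _]]]; simpl in H; lra. Qed.

Lemma relint_nil x : ~ relint (m:=m) [] x.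
Proof. intros H; exact (hull_nil _ (relint_hull _ _ H)). Qed.

Lemma hull_vertex v (s : simplex m) : hull (v :: s) v.
Proof.
  exists (fun i => if i is O then 1 else 0). split; [|split].
  - intros [|i] _; lra.
  - cbn [length]; rewrite sum_first_S (sum_first_0 (length s)); ring.
  - intros j; simpl. rewrite (comb_zero s j); ring.
Qed.

Lemma relint_single v : relint (m:=m) [v] v.
Proof. exists (fun _ => 1). split; [|split]; [intros; lra|simpl; ring|intros j; simpl; ring]. Qed.

Lemma hull_cons_inv v (s : simplex m) z : hull (v :: s) z ->
  exists a w, 0 <= a <= 1 /\ (a = 0 \/ hull s w) /\ forall j, z j = (1 - a) * v j + a * w j.
Proof.
  intros [lam [H1 [H2 H3]]]. cbn [length] in H2; rewrite sum_first_S in H2.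
  have Hnn : forall i, (i < length s)%nat -> 0 <= lam (S i) by intros i Hi; apply H1; simpl; lia.
  have Hs := sum_first_nonneg _ _ Hnn. have H0 := H1 0%nat ltac:(simpl; lia).
  set a := sum_first (fun i => lam (S i)) (length s) in H2 Hs.
  destruct (Req_dec a 0) as [Ha|Ha].
  - exists 0, v. split; [lra|split; [auto|]]. intros j. rewrite H3 /=.
    rewrite (comb_ext (fun i => lam (S i)) (fun _ => 0)); last first.
    { intros i Hi; apply (sum_first_zero _ _ Hnn Ha i Hi). }
    rewrite comb_zero. have -> : lam 0%nat = 1 by lra. ring.
  - exists a, (comb (fun i => / a * lam (S i)) s). split; [lra|split].
    + right. exists (fun i => / a * lam (S i)). split; [|split]; [|rewrite -/a|auto].
      * intros i Hi; have := Hnn i Hi; have : 0 < / a by apply Rinv_0_lt_compat; lra. nra.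
      * rewrite (sum_first_ext _ (fun i => / a * lam (S i) + 0 * 0)); [|intros; ring].
        rewrite sum_first_lin sum_first_0 -/a. field; lra.
    + intros j. rewrite H3 /= comb_scal. have -> : lam 0%nat = 1 - a by lra. field; lra.
Qed.

Definition cons_weights (a : R) (lam : nat -> R) : nat -> R :=
  fun i => if i is S k then a * lam k else 1 - a.

Lemma cons_weights_sum (v : Pt) (s : simplex m) a lam :
  sum_first (cons_weights a lam) (length (v :: s)) = 1 - a + a * sum_first lam (length s).
Proof.
  cbn [length]; rewrite sum_first_S.
  rewrite (sum_first_ext (fun i => cons_weights a lam (S i)) (fun i => a * lam i + 0 * 0)); [|intros; rewrite /cons_weights; ring].
  rewrite sum_first_lin sum_first_0. simpl; ring.
Qed.

Lemma cons_weights_comb v (s : simplex m) a lam j :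
  comb (cons_weights a lam) (v :: s) j = (1 - a) * v j + a * comb lam s j.
Proof.
  simpl. rewrite (comb_ext _ (fun i => a * lam i + 0 * 0)); [|intros; simpl; ring].
  rewrite comb_lin comb_zero. ring.
Qed.

Lemma hull_cons_intro v (s : simplex m) a w : 0 <= a <= 1 -> hull s w ->
  hull (v :: s) (lin (1 - a) v a w).
Proof.
  intros Ha [lam [H1 [H2 H3]]]. exists (cons_weights a lam).
  split; [|split; [rewrite cons_weights_sum H2; ring|intros j; rewrite cons_weights_comb /lin H3; reflexivity]].
  intros [|i] Hi; simpl; [lra|]. have := H1 i ltac:(simpl in Hi; lia). nra.
Qed.

Lemma relint_cons_intro v (s : simplex m) a w : 0 < a < 1 -> relint s w ->
  relint (v :: s) (lin (1 - a) v a w).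
Proof.
  intros Ha [lam [H1 [H2 H3]]]. exists (cons_weights a lam).
  split; [|split; [rewrite cons_weights_sum H2; ring|intros j; rewrite cons_weights_comb /lin H3; reflexivity]].
  intros [|i] Hi; simpl; [lra|]. have := H1 i ltac:(simpl in Hi; lia). intros [? ?]; split; nra.
Qed.

Lemma hull_convex (b : simplex m) p q a : 0 <= a <= 1 -> hull b p -> hull b q ->
  hull b (lin (1 - a) p a q).
Proof.
  intros Ha [lp [P1 [P2 P3]]] [lq [Q1 [Q2 Q3]]].
  exists (fun i => (1 - a) * lp i + a * lq i). split; [|split].
  - intros i Hi; have := P1 i Hi; have := Q1 i Hi; nra.
  - rewrite sum_first_lin P2 Q2; ring.
  - intros j; rewrite comb_lin /lin P3 Q3; ring.
Qed.

Lemma relint_seg (d : simplex m) p q t : hull d p -> relint d q -> 0 < t <= 1 ->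
  relint d (lin (1 - t) p t q).
Proof.
  intros [lp [P1 [P2 P3]]] [lq [Q1 [Q2 Q3]]] Ht.
  have Hs : sum_first (fun i => (1 - t) * lp i + t * lq i) (length d) = 1
    by rewrite sum_first_lin P2 Q2; ring.
  have Hnn : forall k, (k < length d)%nat -> 0 <= (1 - t) * lp k + t * lq k.
  { intros k Hk; have := P1 k Hk; have := Q1 k Hk; intros [? ?] ?; nra. }
  exists (fun i => (1 - t) * lp i + t * lq i). split; [|split]; auto.
  - intros i Hi. have := sum_first_le _ _ i Hnn Hi. have := P1 i Hi; have := Q1 i Hi.
    intros [? ?] ?. split; nra.
  - intros j; rewrite comb_lin /lin P3 Q3; ring.
Qed.

Lemma hull_of_in (b : simplex m) u : In u b -> hull b u.
Proof.
  induction b as [|v b IH]; intros Hu; [destruct Hu|].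
  destruct Hu as [->|Hu]; [apply hull_vertex|].
  apply (hull_ext _ (lin (1 - 1) v 1 u)); [intros j; rewrite /lin; ring|].
  apply hull_cons_intro; [lra|auto].
Qed.

Lemma hull_incl (a b : simplex m) x : incl a b -> hull a x -> hull b x.
Proof.
  revert x; induction a as [|u a IH]; intros x Hab Hx; [destruct (hull_nil _ Hx)|].
  destruct (hull_cons_inv _ _ _ Hx) as [t [w [Ht [Hw Hxj]]]].
  have Hu : hull b u by apply hull_of_in, Hab; left.
  apply (hull_ext _ _ _ (fun j => Logic.eq_sym (Hxj j))).
  destruct Hw as [->|Hw].
  - apply (hull_ext _ u); [intros j; ring|auto].
  - apply hull_convex; auto. apply IH; auto. intros z Hz; apply Hab; right; auto.
Qed.
(** * Metric facts *)

Lemma In_enum (j : 'I_m) : List.In j (enum 'I_m).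
Proof.
  have : j \in enum 'I_m by rewrite mem_enum.
  induction (enum 'I_m) as [|y s IH]; [by []|].
  rewrite seq.in_cons => /orP [/eqP ->|Hj]; [left|right; apply IH]; auto.
Qed.

Lemma fin_max (f : 'I_m -> R) : exists B, 0 <= B /\ forall j, f j <= B.
Proof.
  have Hl : forall l : list 'I_m, exists B, 0 <= B /\ forall j, List.In j l -> f j <= B.
  { induction l as [|a l [B [HB0 HB]]]; [exists 0; split; [lra|intros j []]|].
    exists (Rmax (f a) B). split; [eapply Rle_trans; [apply HB0|apply Rmax_r]|].
    intros j [->|Hj]; [apply Rmax_l|]. eapply Rle_trans; [apply HB; auto|apply Rmax_r]. }
  destruct (Hl (enum 'I_m)) as [B [HB0 HB]]. exists B; split; auto. intros j; apply HB, In_enum.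
Qed.

Lemma close_mono x y a b : close (m:=m) x y a -> a <= b -> close x y b.
Proof. intros H Hab j; have := H j; lra. Qed.

Lemma hull_bounded (s : simplex m) : exists B, 0 <= B /\ forall w, hull s w -> forall j, Rabs (w j) <= B.
Proof.
  induction s as [|v s [B [HB0 HB]]].
  - exists 0; split; [lra|]. intros w Hw; destruct (hull_nil _ Hw).
  - destruct (fin_max (fun j => Rabs (v j))) as [Bv [_ HBv]].
    exists (Rmax Bv B). split; [eapply Rle_trans; [apply HB0|apply Rmax_r]|].
    intros z Hz j. destruct (hull_cons_inv _ _ _ Hz) as [a [w [Ha [Hw Hzj]]]].
    rewrite Hzj. have Hv := HBv j. have M1 := Rmax_l Bv B. have M2 := Rmax_r Bv B.
    destruct Hw as [->|Hw].
    + have -> : (1 - 0) * v j + 0 * w j = v j by ring. lra.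
    + have Hwj := HB w Hw j. eapply Rle_trans; [apply Rabs_triang|].
      rewrite !Rabs_mult (Rabs_right a) ?(Rabs_right (1 - a)); try lra. nra.
Qed.

Lemma lt_eps_scaled x C : 0 < C -> (forall eps, 0 < eps -> Rabs x < C * eps) -> x = 0.
Proof.
  intros HC H. destruct (Req_dec x 0) as [|Hx]; auto.
  have := H (Rabs x / C) (Rdiv_lt_0_compat _ _ (Rabs_pos_lt _ Hx) HC).
  have -> : C * (Rabs x / C) = Rabs x by field; lra. lra.
Qed.

Lemma inv_small d : 0 < d -> exists N, forall p, (N <= p)%nat -> / (INR p + 1) < d.
Proof.
  intros Hd. destruct (INR_unbounded (/ d)) as [N HN]. exists N. intros p Hp.
  have HpN := le_INR _ _ Hp. have Hid : 0 < / d by apply Rinv_0_lt_compat.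
  rewrite -(Rinv_inv d). apply Rinv_lt_contravar; [|lra].
  apply Rmult_lt_0_compat; [lra|]. have := pos_INR p; lra.
Qed.

Lemma cluster (u : nat -> R) : (forall n, 0 <= u n <= 1) ->
  exists l, 0 <= l <= 1 /\
    forall eps, 0 < eps -> forall N, exists p, (N <= p)%nat /\ Rabs (u p - l) < eps.
Proof.
  intros Hu. destruct (Bolzano_Weierstrass u _ (compact_P3 0 1) Hu) as [l Hl].
  have Hc : forall eps, 0 < eps -> forall N, exists p, (N <= p)%nat /\ Rabs (u p - l) < eps.
  { intros eps He N. destruct (Hl (disc l (mkposreal eps He)) N) as [p [Hp Hd]].
    - exists (mkposreal eps He). intros x Hx; exact Hx.
    - exists p; split; auto. }
  exists l; split; auto. split.
  - destruct (Rle_lt_dec 0 l) as [|Hl0]; auto. destruct (Hc (- l) ltac:(lra) 0%nat) as [p [_ Hp]].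
    have := Hu p; have := Rabs_def2 _ _ Hp; lra.
  - destruct (Rle_lt_dec l 1) as [|Hl0]; auto. destruct (Hc (l - 1) ltac:(lra) 0%nat) as [p [_ Hp]].
    have := Hu p; have := Rabs_def2 _ _ Hp; lra.
Qed.

Definition apex_approx (v : Pt) (s : simplex m) (y : Pt) (l : R) : Prop :=
  forall eps, 0 < eps -> exists a w,
    0 <= a <= 1 /\ (a = 0 \/ hull s w) /\ Rabs (a - l) < eps /\ close (lin (1 - a) v a w) y eps.

Lemma hull_cons_limit v s y :
  (forall eps, 0 < eps -> exists z, hull (v :: s) z /\ close z y eps) ->
  exists l, 0 <= l <= 1 /\ apex_approx v s y l.
Proof.
  intros Hy.
  have Hseq : forall n : nat, exists aw : R * Pt,
      0 <= fst aw <= 1 /\ (fst aw = 0 \/ hull s (snd aw)) /\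
      close (lin (1 - fst aw) v (fst aw) (snd aw)) y (/ (INR n + 1)).
  { intros n. have Hpos : 0 < / (INR n + 1) by apply Rinv_0_lt_compat; have := pos_INR n; lra.
    destruct (Hy _ Hpos) as [z [Hz Hc]]. destruct (hull_cons_inv _ _ _ Hz) as [a [w [Ha [Hw Hzj]]]].
    exists (a, w); simpl. split; [auto|split; [auto|]]. intros j; rewrite /lin -Hzj; apply Hc. }
  destruct (choice _ Hseq) as [aw Haw].
  destruct (cluster (fun n => fst (aw n)) (fun n => proj1 (Haw n))) as [l [Hl Hcl]].
  exists l; split; auto. intros eps He.
  destruct (inv_small eps He) as [N HN]. destruct (Hcl eps He N) as [p [Hp Hap]].
  destruct (Haw p) as [Ha [Hw Hc]]. exists (fst (aw p)), (snd (aw p)).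
  split; [auto|split; [auto|split; [auto|]]]. apply (close_mono _ _ _ _ Hc). have := HN p Hp; lra.
Qed.

Lemma apex_approx_0 v s y : apex_approx v s y 0 -> forall j, y j = v j.
Proof.
  intros Hcl j. destruct (hull_bounded s) as [B [HB0 HB]].
  apply Rminus_diag_uniq, (lt_eps_scaled _ (1 + (B + Rabs (v j)))); [have := Rabs_pos (v j); lra|].
  intros eps He. destruct (Hcl eps He) as [a [w [Ha [Hw [Hal Hc]]]]].
  have Hc' := Hc j. rewrite /lin in Hc'. rewrite Rminus_0_r Rabs_right in Hal; [|lra].
  have Hwv : a * Rabs (w j - v j) <= eps * (B + Rabs (v j)).
  { destruct Hw as [->|Hw]; [have := Rabs_pos (w j - v j); have := Rabs_pos (v j); nra|].
    have : Rabs (w j - v j) <= B + Rabs (v j).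
    { have := HB w Hw j. have := Rabs_triang (w j) (- v j). rewrite Rabs_Ropp. unfold Rminus; lra. }
    have := Rabs_pos (w j - v j). nra. }
  have -> : y j - v j = - (((1 - a) * v j + a * w j) - y j) + a * (w j - v j) by ring.
  eapply Rle_lt_trans; [apply Rabs_triang|]. rewrite Rabs_Ropp Rabs_mult (Rabs_right a); lra.
Qed.

(** If they cluster at [l > 0], the point [v + (y - v) / l] is a limit point
    of [hull s]; [y] is its combination with the apex of weight [1 - l]. *)
Lemma apex_approx_pos v s y l : 0 < l -> apex_approx v s y l ->
  forall eta, 0 < eta -> exists w, hull s w /\ close w (fun j => v j + (y j - v j) / l) eta.
Proof.
  intros Hl Hcl eta Heta.
  destruct (fin_max (fun j => Rabs (y j - v j))) as [B [HB0 HB]].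
  set C := 2 * (1 + B / l) / l.
  have HBl : 0 <= B / l by apply Rmult_le_pos; [lra|apply Rlt_le, Rinv_0_lt_compat; lra].
  have HC : 0 < C by apply Rdiv_lt_0_compat; lra.
  set eps := Rmin (l / 2) (eta / C).
  have He1 : eps <= l / 2 := Rmin_l _ _. have He2 : eps <= eta / C := Rmin_r _ _.
  have Heps : 0 < eps by apply Rmin_glb_lt; [lra|apply Rdiv_lt_0_compat; lra].
  destruct (Hcl eps Heps) as [a [w [Ha [Hw [Hal Hc]]]]].
  have [Hal1 Hal2] := Rabs_def2 _ _ Hal.
  exists w. split; [destruct Hw; [lra|auto]|]. intros j.
  set X := w j - (v j + (y j - v j) / l).
  have HaX : a * X = ((1 - a) * v j + a * w j - y j) + (y j - v j) * (l - a) / l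
    by rewrite /X; field; lra.
  have Hbound : a * Rabs X < eps * (1 + B / l).
  { rewrite -(Rabs_right a); [|lra]. rewrite -Rabs_mult HaX.
    eapply Rle_lt_trans; [apply Rabs_triang|].
    rewrite /Rdiv !Rabs_mult (Rabs_right (/ l)); [|apply Rle_ge, Rlt_le, Rinv_0_lt_compat; lra].
    have Hla : Rabs (l - a) <= eps by rewrite Rabs_minus_sym; lra.
    have Hprod : Rabs (y j - v j) * Rabs (l - a) * / l <= B * eps * / l.
    { apply Rmult_le_compat_r; [apply Rlt_le, Rinv_0_lt_compat; lra|].
      apply Rmult_le_compat; [apply Rabs_pos|apply Rabs_pos|apply HB|exact Hla]. }
    have := Hc j. rewrite /lin. lra. }
  have HCe : 2 * (eps * (1 + B / l)) / l <= eta.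
  { have -> : 2 * (eps * (1 + B / l)) / l = C * eps by rewrite /C; field; lra.
    apply (Rmult_le_reg_r (/ C)); [apply Rinv_0_lt_compat; lra|].
    have -> : C * eps * / C = eps by field; lra. exact He2. }
  have HlX : l * Rabs X < 2 * (eps * (1 + B / l)) by have := Rabs_pos X; nra.
  apply (Rmult_lt_reg_l l); [lra|]. apply (Rlt_le_trans _ _ _ HlX).
  have -> : 2 * (eps * (1 + B / l)) = l * (2 * (eps * (1 + B / l)) / l) by field; lra.
  apply Rmult_le_compat_l; lra.
Qed.

Lemma hull_closed (s : simplex m) y :
  (forall eps, 0 < eps -> exists z, hull s z /\ close z y eps) -> hull s y.
Proof.
  revert y; induction s as [|v s IH]; intros y Hy.
  { destruct (Hy 1 ltac:(lra)) as [z [Hz _]]. destruct (hull_nil _ Hz). }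
  destruct (hull_cons_limit v s y Hy) as [l [Hl Hcl]].
  destruct (Req_dec l 0) as [->|Hl0].
  - apply (hull_ext _ v); [intros j; symmetry; apply (apex_approx_0 v s y Hcl)|apply hull_vertex].
  - have Hws := IH _ (apex_approx_pos v s y l ltac:(lra) Hcl).
    apply (hull_ext _ (lin (1 - l) v l (fun j => v j + (y j - v j) / l))).
    + intros j; rewrite /lin; field; lra.
    + apply hull_cons_intro; auto.
Qed.

Lemma hull_open_compl (s : simplex m) (p : Pt) : ~ hull s p ->
  exists e, 0 < e /\ forall q, close q p e -> ~ hull s q.
Proof.
  intros Hn. apply NNPP; intros Hc. apply Hn, hull_closed. intros eps He.
  apply NNPP; intros Hc2. apply Hc. exists eps; split; auto.
  intros q Hq Hsq. apply Hc2. exists q; split; auto.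
Qed.

(** * Barycentric coordinates *)

Definition pt0 : Pt := fun _ => 0.

Definition delta (k : nat) : nat -> R := fun i => if Nat.eqb i k then 1 else 0.

Lemma sum_first_delta k n : (k < n)%nat -> sum_first (delta k) n = 1.
Proof.
  induction n; intros Hk; [lia|]. simpl. destruct (Nat.eq_dec k n) as [->|Hne].
  - rewrite (sum_first_ext (delta n) (fun _ => 0)); [rewrite sum_first_0 /delta Nat.eqb_refl; ring|].
    intros i Hi; rewrite /delta; have : Nat.eqb i n = false by apply Nat.eqb_neq; lia. by move=> ->.
  - rewrite IHn; [|lia]. rewrite /delta; have : Nat.eqb n k = false by apply Nat.eqb_neq; lia.
    move=> ->; ring.
Qed.

Lemma comb_delta k (b : simplex m) j : (k < length b)%nat -> comb (delta k) b j = nth k b pt0 j.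
Proof.
  revert k; induction b as [|v b IH]; intros k Hk; simpl in Hk; [lia|].
  destruct k as [|k]; simpl.
  - rewrite (comb_ext (fun i => delta 0 (S i)) (fun _ => 0)); [rewrite comb_zero /delta /=; ring|].
    intros; reflexivity.
  - rewrite (comb_ext (fun i => delta (S k) (S i)) (delta k)); [|intros; reflexivity].
    rewrite IH; [|lia]. rewrite /delta /=; ring.
Qed.

Lemma aff_indep_nodup (b : simplex m) : aff_indep b -> NoDup b.
Proof.
  intros H. apply (NoDup_nth b pt0). intros i k Hi Hk E.
  destruct (Nat.eq_dec i k) as [|Hne]; auto. exfalso.
  have Hz : sum_first (fun n => 1 * delta i n + (-1) * delta k n) (length b) = 0
    by rewrite sum_first_lin !sum_first_delta //; ring.
  have Hc : forall j, comb (fun n => 1 * delta i n + (-1) * delta k n) b j = 0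
    by intros j; rewrite comb_lin !comb_delta // E; ring.
  have := H _ Hz Hc i Hi. rewrite /delta Nat.eqb_refl.
  have -> : Nat.eqb i k = false by apply Nat.eqb_neq. lra.
Qed.

Lemma coords_unique (b : simplex m) lam mu : aff_indep b ->
  sum_first lam (length b) = 1 -> sum_first mu (length b) = 1 ->
  (forall j, comb lam b j = comb mu b j) -> forall i, (i < length b)%nat -> lam i = mu i.
Proof.
  intros H H1 H2 H3 i Hi.
  have Hz : sum_first (fun n => 1 * lam n + (-1) * mu n) (length b) = 0
    by rewrite sum_first_lin H1 H2; ring.
  have Hc : forall j, comb (fun n => 1 * lam n + (-1) * mu n) b j = 0
    by intros j; rewrite comb_lin H3; ring.
  have := H _ Hz Hc i Hi. lra.
Qed.

Lemma hull_incl_coords (a b : simplex m) x : incl a b -> hull a x ->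
  exists lam, (forall i, (i < length b)%nat -> 0 <= lam i) /\ sum_first lam (length b) = 1 /\
    (forall j, x j = comb lam b j) /\
    (forall i, (i < length b)%nat -> ~ In (nth i b pt0) a -> lam i = 0).
Proof.
  revert x; induction a as [|u a IH]; intros x Hab Hx; [destruct (hull_nil _ Hx)|].
  destruct (hull_cons_inv _ _ _ Hx) as [t [w [Ht [Hw Hxj]]]].
  destruct (In_nth b u pt0 (Hab u (or_introl Logic.eq_refl))) as [k [Hk Hku]].
  have D1 : forall i, 0 <= delta k i by intros i; rewrite /delta; destruct (Nat.eqb i k); lra.
  have D2 := sum_first_delta k _ Hk.
  have D3 : forall j, u j = comb (delta k) b j by intros j; rewrite comb_delta // Hku.
  have Hd0 : forall i, ~ In (nth i b pt0) (u :: a) -> delta k i = 0.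
  { intros i Hn. rewrite /delta. destruct (Nat.eqb_spec i k) as [->|]; auto.
    exfalso; apply Hn; left; auto. }
  destruct Hw as [Ht0|Hw].
  - exists (delta k). split; [auto|split; [auto|split; [|auto]]].
    intros j; rewrite Hxj Ht0 -D3; ring.
  - destruct (IH w (fun z Hz => Hab z (or_intror Hz)) Hw) as [mu [M1 [M2 [M3 M4]]]].
    exists (fun i => (1 - t) * delta k i + t * mu i). split; [|split; [|split]].
    + intros i Hi; have := D1 i; have := M1 i Hi; nra.
    + rewrite sum_first_lin D2 M2; ring.
    + intros j; rewrite comb_lin -D3 -M3 Hxj; ring.
    + intros i Hi Hn. rewrite (Hd0 i Hn) (M4 i Hi); [ring|]. intros Hin; apply Hn; right; auto.
Qed.

Lemma support (s : simplex m) x : hull s x ->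
  exists t, incl t s /\ (NoDup s -> NoDup t) /\ relint t x.
Proof.
  revert x; induction s as [|v s IH]; intros x Hx; [destruct (hull_nil _ Hx)|].
  destruct (hull_cons_inv _ _ _ Hx) as [a [w [Ha [Hw Hxj]]]].
  destruct (Req_dec a 0) as [Ha0|Ha0].
  { exists [v]. split; [intros z [<-|[]]; left; auto|split; [intros _; constructor; [intros []|constructor]|]].
    apply (relint_ext _ v); [intros j; rewrite Hxj Ha0; ring|apply relint_single]. }
  destruct Hw as [|Hw]; [lra|]. destruct (IH w Hw) as [t [Ht1 [Ht2 Ht3]]].
  destruct (Req_dec a 1) as [Ha1|Ha1].
  - exists t. split; [intros z Hz; right; auto|split].
    + intros Hnd; apply Ht2; inversion Hnd; auto.
    + apply (relint_ext _ w); [intros j; rewrite Hxj Ha1; ring|auto].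
  - exists (v :: t). split; [intros z [<-|Hz]; [left|right]; auto|split].
    + intros Hnd; inversion Hnd; subst. constructor; auto.
    + apply (relint_ext _ (lin (1 - a) v a w)); [intros j; rewrite Hxj; reflexivity|].
      apply relint_cons_intro; auto; lra.
Qed.

Lemma perm_coords (l l' : simplex m) : Permutation l l' -> forall lam, exists lam',
  (forall i, (i < length l')%nat -> exists k, (k < length l)%nat /\ lam' i = lam k) /\
  sum_first lam' (length l') = sum_first lam (length l) /\
  (forall j, comb lam' l' j = comb lam l j).
Proof.
  induction 1 as [|x l l' Hp IH|x y l|l l' l'' H1 IH1 H2 IH2]; intros lam.
  - exists lam; split; [intros i Hi; exists i; auto|split; auto].
  - destruct (IH (fun i => lam (S i))) as [mu [M1 [M2 M3]]].
    exists (fun i => if i is S k then mu k else lam 0%nat). split; [|split].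
    + intros [|i] Hi; [exists 0%nat; simpl; split; [lia|auto]|].
      destruct (M1 i ltac:(simpl in Hi; lia)) as [k [Hk E]]. exists (S k); simpl; split; [lia|auto].
    + cbn [length]. rewrite !sum_first_S M2; reflexivity.
    + intros j; simpl; rewrite M3; reflexivity.
  - exists (fun i => match i with 0 => lam 1%nat | 1 => lam 0%nat | S (S k) => lam (S (S k)) end)%nat.
    split; [|split].
    + intros [|[|i]] Hi; [exists 1%nat|exists 0%nat|exists (S (S i))]; simpl in *; split; auto; lia.
    + cbn [length]. rewrite !sum_first_S. simpl. ring.
    + intros j; simpl; ring.
  - destruct (IH1 lam) as [mu [M1 [M2 M3]]]. destruct (IH2 mu) as [nu [N1 [N2 N3]]].
    exists nu. split; [|split].
    + intros i Hi. destruct (N1 i Hi) as [k [Hk E]]. destruct (M1 k Hk) as [k' [Hk' E']].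
      exists k'; split; auto; congruence.
    + congruence.
    + intros j; rewrite N3 M3; reflexivity.
Qed.

Lemma relint_perm (l l' : simplex m) x : Permutation l l' -> relint l x -> relint l' x.
Proof.
  intros Hp [lam [H1 [H2 H3]]]. destruct (perm_coords l l' Hp lam) as [lam' [L1 [L2 L3]]].
  exists lam'. split; [|split].
  - intros i Hi; destruct (L1 i Hi) as [k [Hk ->]]; auto.
  - congruence.
  - intros j; rewrite L3; auto.
Qed.

(** * The simplicial complex *)

Variable K : list (simplex m).
Hypothesis HK : simplicial_complex K.

Lemma hull_poly (d : simplex m) w : In d K -> hull d w -> polyhedron K w.
Proof. intros Hd Hw; exists d; split; auto. Qed.

Lemma relint_poly (d : simplex m) w : In d K -> relint d w -> polyhedron K w.
Proof. intros Hd Hw; apply (hull_poly d); auto; apply relint_hull; auto. Qed.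

Lemma cell_of x : polyhedron K x -> exists c, is_cell K c /\ relint c x.
Proof.
  intros [s [Hs Hx]]. destruct HK as [Hai [Hface _]].
  destruct (support s x Hx) as [t [Ht1 [Ht2 Ht3]]].
  destruct (Hface s t Hs Ht1) as [t' [Ht' [I1 I2]]].
  have Hnd := aff_indep_nodup _ (Hai s Hs). have Hnd' := aff_indep_nodup _ (Hai t' Ht').
  have Hp : Permutation t t' by apply NoDup_Permutation; auto; intros z; split; auto.
  exists t'. split; [split; auto|apply (relint_perm t); auto].
  intros ->. apply (relint_nil x). apply (relint_perm t); auto.
Qed.

(** If [x] is in the cell of [c] and in the simplex [d], then [c] is a face
    of [d]: the common face [tau] carries the coordinates of [x], which are
    positive on every vertex of [c]. *)
Lemma face_incl (c d : simplex m) x : In c K -> In d K -> relint c x -> hull d x -> incl c d.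
Proof.
  intros Hc Hd Hx Hdx. destruct HK as [Hai [_ Hint]].
  destruct (Hint c d Hc Hd) as [tau [Ht1 [Ht2 Ht3]]].
  have Htx : hull tau x by apply Ht3; split; auto; apply relint_hull.
  intros u Hu. apply Ht2. destruct (In_nth c u pt0 Hu) as [k [Hk <-]].
  destruct (classic (In (nth k c pt0) tau)) as [|Hn]; auto. exfalso.
  destruct (hull_incl_coords tau c x Ht1 Htx) as [lam [L1 [L2 [L3 L4]]]].
  destruct Hx as [rho [R1 [R2 R3]]].
  have E := coords_unique c lam rho (Hai c Hc) L2 R2
    ltac:(intros j; rewrite -L3 -R3; reflexivity) k Hk.
  have := L4 k Hk Hn. have := R1 k Hk. lra.
Qed.

Lemma cell_unique (c d : simplex m) x y : In c K -> In d K ->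
  relint c x -> relint d x -> relint c y -> relint d y.
Proof.
  intros Hc Hd Hcx Hdx Hcy. destruct HK as [Hai _].
  have I1 := face_incl c d x Hc Hd Hcx (relint_hull _ _ Hdx).
  have I2 := face_incl d c x Hd Hc Hdx (relint_hull _ _ Hcx).
  apply (relint_perm c); auto. apply NoDup_Permutation; try apply aff_indep_nodup; auto.
  intros z; split; auto.
Qed.

(** It suffices to
    avoid the finitely many simplexes of [K] not containing [p], each of
    which has an open complement. *)
Lemma star_nbhd (p : Pt) : polyhedron K p -> exists e, 0 < e /\
  forall q, polyhedron K q -> close q p e -> exists c, is_cell K c /\ relint c q /\ hull c p.
Proof.
  intros Hp.
  have Havoid : forall l : list (simplex m), exists e, 0 < e /\
      forall s, In s l -> ~ hull s p -> forall q, close q p e -> ~ hull s q.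
  { induction l as [|s l [e [He IH]]]; [exists 1; split; [lra|intros s []]|].
    destruct (classic (hull s p)) as [Hs|Hs].
    - exists e; split; auto. intros s' [<-|Hs'] Hn; [contradiction|auto].
    - destruct (hull_open_compl s p Hs) as [e' [He' H']].
      exists (Rmin e e'). split; [apply Rmin_glb_lt; auto|].
      intros s' [<-|Hs'] Hn q Hq.
      + apply H'. eapply close_mono; [apply Hq|apply Rmin_r].
      + apply (IH s'); auto. eapply close_mono; [apply Hq|apply Rmin_l]. }
  destruct (Havoid K) as [e [He He']]. exists e; split; auto.
  intros q Hq Hqp. destruct (cell_of q Hq) as [c [Hc Hcq]].
  exists c; split; [auto|split; [auto|]].
  apply NNPP; intros Hn. apply (He' c (proj1 Hc) Hn q Hqp). by apply relint_hull.
Qed.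

(** * Paths *)

Definition cont_on (F : R -> Pt) (lo hi : R) : Prop :=
  forall t, lo <= t <= hi -> forall eps, 0 < eps -> exists d, 0 < d /\
    forall s, lo <= s <= hi -> Rabs (s - t) < d -> close (F s) (F t) eps.

Lemma path_intro f : (forall t, 0 <= t <= 1 -> polyhedron K (f t)) -> cont_on f 0 1 -> is_path K f.
Proof. intros H1 H2; split; [exact H1|exact H2]. Qed.

Lemma cont_on_affine f h c lo hi : cont_on f 0 1 -> 0 < c ->
  (forall s t, h s - h t = c * (s - t)) -> (forall t, lo <= t <= hi -> 0 <= h t <= 1) ->
  cont_on (fun t => f (h t)) lo hi.
Proof.
  intros Hf Hc Hh Hm t Ht eps He. destruct (Hf _ (Hm t Ht) eps He) as [dl [Hd Hd']].
  exists (dl / c). split; [apply Rdiv_lt_0_compat; auto|]. intros s Hs Hst.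
  apply Hd'; [auto|]. rewrite Hh Rabs_mult (Rabs_right c); [|lra].
  apply (Rmult_lt_reg_r (/ c)); [apply Rinv_0_lt_compat; auto|].
  have -> : c * Rabs (s - t) * / c = Rabs (s - t) by field; lra. exact Hst.
Qed.

Lemma path_star pi t : is_path K pi -> 0 <= t <= 1 -> exists d, 0 < d /\
  forall t', 0 <= t' <= 1 -> Rabs (t' - t) < d ->
    exists c, is_cell K c /\ relint c (pi t') /\ hull c (pi t).
Proof.
  intros [Hin Hcont] Ht. destruct (star_nbhd (pi t) (Hin t Ht)) as [e [He Hstar]].
  destruct (Hcont t Ht e He) as [d [Hd Hd']]. exists d; split; [exact Hd|].
  intros t' Ht' Htt. apply Hstar; [apply Hin; auto|apply Hd'; auto].
Qed.

Definition glue (t0 : R) (F G : R -> Pt) : R -> Pt := fun t => if Rle_dec t t0 then F t else G t.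

Lemma glue_path t0 F G : 0 < t0 < 1 -> cont_on F 0 t0 -> cont_on G t0 1 -> F t0 = G t0 ->
  (forall t, 0 <= t <= t0 -> polyhedron K (F t)) -> (forall t, t0 <= t <= 1 -> polyhedron K (G t)) ->
  is_path K (glue t0 F G).
Proof.
  intros Ht0 HF HG E PF PG. apply path_intro.
  { intros t Ht. rewrite /glue. destruct (Rle_dec t t0); [apply PF|apply PG]; lra. }
  intros t Ht eps He. rewrite /glue.
  destruct (Rtotal_order t t0) as [Hlt|[Heq|Hgt]].
  - destruct (HF t ltac:(lra) eps He) as [d [Hd Hd']].
    exists (Rmin d (t0 - t)). split; [apply Rmin_glb_lt; lra|]. intros s Hs Hst.
    have := Rmin_l d (t0 - t); have := Rmin_r d (t0 - t); have := Rabs_def2 _ _ Hst; intros [? ?] ? ?.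
    destruct (Rle_dec s t0); [|lra]. destruct (Rle_dec t t0); [|lra]. apply Hd'; lra.
  - subst t. destruct (HF t0 ltac:(lra) eps He) as [d1 [Hd1 Hd1']].
    destruct (HG t0 ltac:(lra) eps He) as [d2 [Hd2 Hd2']].
    exists (Rmin d1 d2). split; [apply Rmin_glb_lt; lra|]. intros s Hs Hst.
    have := Rmin_l d1 d2; have := Rmin_r d1 d2; have := Rabs_def2 _ _ Hst; intros [? ?] ? ?.
    destruct (Rle_dec t0 t0); [|lra]. destruct (Rle_dec s t0); [apply Hd1'; lra|].
    rewrite E; apply Hd2'; lra.
  - destruct (HG t ltac:(lra) eps He) as [d [Hd Hd']].
    exists (Rmin d (t - t0)). split; [apply Rmin_glb_lt; lra|]. intros s Hs Hst.
    have := Rmin_l d (t - t0); have := Rmin_r d (t - t0); have := Rabs_def2 _ _ Hst; intros [? ?] ? ?.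
    destruct (Rle_dec s t0); [lra|]. destruct (Rle_dec t t0); [lra|]. apply Hd'; lra.
Qed.

Definition concat (f g : R -> Pt) : R -> Pt :=
  glue (1/2) (fun t => f (2 * t)) (fun t => g (2 * t - 1)).

Lemma concat_path f g : is_path K f -> is_path K g -> f 1 = g 0 -> is_path K (concat f g).
Proof.
  intros Hf Hg E. apply glue_path; [lra| | | | |].
  - apply cont_on_affine with (c := 2); [exact (proj2 Hf)|lra|intros; ring|intros; lra].
  - apply cont_on_affine with (c := 2); [exact (proj2 Hg)|lra|intros; ring|intros; lra].
  - have -> : 2 * (1/2) - 1 = 0 by field. have -> : 2 * (1/2) = 1 by field. exact E.
  - intros t Ht; apply (proj1 Hf); lra.
  - intros t Ht; apply (proj1 Hg); lra.
Qed.

Lemma concat_l f g t : t <= 1/2 -> concat f g t = f (2 * t).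
Proof. intros H; rewrite /concat /glue; destruct (Rle_dec t (1/2)); [reflexivity|lra]. Qed.

Lemma concat_r f g t : 1/2 < t -> concat f g t = g (2 * t - 1).
Proof. intros H; rewrite /concat /glue; destruct (Rle_dec t (1/2)); [lra|reflexivity]. Qed.

Lemma concat_0 f g : concat f g 0 = f 0.
Proof. rewrite concat_l; [|lra]. by rewrite Rmult_0_r. Qed.

Lemma concat_1 f g : concat f g 1 = g 1.
Proof. rewrite concat_r; [|lra]. have -> : 2 * 1 - 1 = 1 by ring. reflexivity. Qed.

Lemma concat_interior f g (P : Pt -> Prop) :
  (forall t, 0 < t < 1 -> P (f t)) -> P (f 1) -> (forall t, 0 < t < 1 -> P (g t)) ->
  forall t, 0 < t < 1 -> P (concat f g t).
Proof.
  intros Hf H1 Hg t Ht. destruct (Rtotal_order t (1/2)) as [Hlt|[->|Hgt]].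
  - rewrite concat_l; [|lra]. apply Hf; lra.
  - rewrite concat_l; [|lra]. have -> : 2 * (1/2) = 1 by field. exact H1.
  - rewrite concat_r; [|lra]. apply Hg; lra.
Qed.

Definition tail (pi : R -> Pt) (t0 : R) : R -> Pt := fun t => pi ((1 - t0) * t + t0).

Lemma tail_path pi t0 : is_path K pi -> 0 <= t0 < 1 -> is_path K (tail pi t0).
Proof.
  intros Hpi Ht0. apply path_intro.
  - intros t Ht. apply (proj1 Hpi). nra.
  - apply (cont_on_affine pi (fun t => (1 - t0) * t + t0) (1 - t0)); [exact (proj2 Hpi)|lra|intros; ring|intros; nra].
Qed.

Lemma tail_0 pi t0 : tail pi t0 0 = pi t0.
Proof. rewrite /tail. by rewrite Rmult_0_r Rplus_0_l. Qed.

Lemma tail_1 pi t0 : tail pi t0 1 = pi 1.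
Proof. rewrite /tail. have -> : (1 - t0) * 1 + t0 = 1 by ring. reflexivity. Qed.

Definition seg (p q : Pt) : R -> Pt := fun t => lin (1 - t) p t q.

Lemma seg_0 p q : seg p q 0 = p.
Proof. apply functional_extensionality => j. rewrite /seg /lin; ring. Qed.

Lemma seg_1 p q : seg p q 1 = q.
Proof. apply functional_extensionality => j. rewrite /seg /lin; ring. Qed.

Lemma seg_lipschitz p q : exists B, 0 < B /\
  forall s t j, Rabs (seg p q s j - seg p q t j) <= B * Rabs (s - t).
Proof.
  destruct (fin_max (fun j => Rabs (q j - p j))) as [B [HB0 HB]]. exists (B + 1).
  split; [lra|]. intros s t j. rewrite /seg /lin.
  have -> : (1 - s) * p j + s * q j - ((1 - t) * p j + t * q j) = (s - t) * (q j - p j) by ring.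
  rewrite Rabs_mult. have := HB j. have := Rabs_pos (s - t). have := Rabs_pos (q j - p j). nra.
Qed.

Lemma seg_cont p q lo hi : cont_on (seg p q) lo hi.
Proof.
  destruct (seg_lipschitz p q) as [B [HB HB']]. intros t Ht eps He.
  exists (eps / B). split; [apply Rdiv_lt_0_compat; auto|]. intros s Hs Hst j.
  apply (Rle_lt_trans _ _ _ (HB' s t j)).
  apply (Rmult_lt_reg_r (/ B)); [apply Rinv_0_lt_compat; auto|].
  have -> : B * Rabs (s - t) * / B = Rabs (s - t) by field; lra. exact Hst.
Qed.

Lemma seg_near p q e : 0 < e -> exists t0, 0 < t0 <= 1 /\ close (seg p q t0) p e.
Proof.
  intros He. destruct (seg_lipschitz p q) as [B [HB HB']].
  set t0 := Rmin 1 (e / (2 * B)).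
  have Ht0 : 0 < t0 <= 1 by split; [apply Rmin_glb_lt; [lra|apply Rdiv_lt_0_compat; lra]|apply Rmin_l].
  have Ht0e : t0 <= e / (2 * B) := Rmin_r _ _.
  exists t0. split; auto. intros j. have := HB' t0 0 j.
  rewrite seg_0 Rminus_0_r (Rabs_right t0); [|lra].
  have : B * t0 <= B * (e / (2 * B)) by apply Rmult_le_compat_l; lra.
  have -> : B * (e / (2 * B)) = e / 2 by field; lra. lra.
Qed.

Lemma seg_spath_in_cell d p q : is_cell K d -> hull d p -> hull d q ->
  (forall t, 0 < t < 1 -> relint d (seg p q t)) -> simplicial_path K (seg p q).
Proof.
  intros [Hd Hd0] Hp Hq Hr. split.
  - apply path_intro; [|apply seg_cont].
    intros t Ht; apply (hull_poly d); auto. apply hull_convex; auto.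
  - exists 1%nat, INR, (fun _ => d). split; [reflexivity|split; [reflexivity|split]].
    + intros i Hi; have -> : i = 0%nat by lia. simpl; lra.
    + intros i Hi; have -> : i = 0%nat by lia. split; [split; auto|].
      intros t Ht; apply Hr; simpl in Ht; lra.
Qed.

Lemma seg_relint_rev d p q t : hull d p -> relint d q -> 0 <= t < 1 -> relint d (seg q p t).
Proof.
  intros Hp Hq Ht.
  apply (relint_ext _ (lin (1 - (1 - t)) p (1 - t) q)); [intros j; rewrite /seg /lin; ring|].
  apply relint_seg; auto; lra.
Qed.

Lemma seg_spath d p q : is_cell K d -> hull d p -> relint d q ->
  simplicial_path K (seg p q) /\ simplicial_path K (seg q p).
Proof.
  intros Hd Hp Hq. have Hq' := relint_hull _ _ Hq. split.
  - apply (seg_spath_in_cell d); auto. intros t Ht. apply relint_seg; auto; lra.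
  - apply (seg_spath_in_cell d); auto. intros t Ht. apply seg_relint_rev; auto; lra.
Qed.

Lemma incr_le (s : nat -> R) k : (forall i, (i < k)%nat -> s i < s (S i)) ->
  forall i j, (i <= j <= k)%nat -> s i <= s j.
Proof.
  intros H i j. induction j as [|j IH]; intros Hij; [(have -> : i = 0%nat by lia); lra|].
  destruct (Nat.eq_dec i (S j)) as [Heq|Hne]; [rewrite Heq; lra|].
  have := H j ltac:(lia). have := IH ltac:(lia). lra.
Qed.

Definition join_pts (k1 : nat) (s1 s2 : nat -> R) (i : nat) : R :=
  if Nat.leb i k1 then s1 i / 2 else (1 + s2 (i - k1)%nat) / 2.

Lemma join_pts_l k1 s1 s2 i : (i <= k1)%nat -> join_pts k1 s1 s2 i = s1 i / 2.
Proof. intros H; rewrite /join_pts. by have -> : Nat.leb i k1 = true by apply Nat.leb_le. Qed.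

Lemma join_pts_r k1 s1 s2 i : s1 k1 = 1 -> s2 0%nat = 0 -> (k1 <= i)%nat ->
  join_pts k1 s1 s2 i = (1 + s2 (i - k1)%nat) / 2.
Proof.
  intros H1 H2 H; rewrite /join_pts. destruct (Nat.leb_spec i k1); [|reflexivity].
  have E : i = k1 by lia. subst i. rewrite Nat.sub_diag H1 H2; field.
Qed.

Lemma concat_spath f g : simplicial_path K f -> simplicial_path K g -> f 1 = g 0 ->
  simplicial_path K (concat f g).
Proof.
  intros [Pf [k1 [s1 [c1 [S10 [S11 [S1m S1c]]]]]]] [Pg [k2 [s2 [c2 [S20 [S21 [S2m S2c]]]]]]] E.
  split; [apply concat_path; auto|].
  have Hk1 : (0 < k1)%nat by destruct k1; [rewrite S10 in S11; lra|lia].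
  have Hk2 : (0 < k2)%nat by destruct k2; [rewrite S20 in S21; lra|lia].
  exists (k1 + k2)%nat, (join_pts k1 s1 s2), (fun i => if Nat.ltb i k1 then c1 i else c2 (i - k1)%nat).
  split; [|split; [|split]].
  - rewrite join_pts_l; [|lia]. rewrite S10; lra.
  - rewrite join_pts_r; [|auto|auto|lia]. have -> : (k1 + k2 - k1 = k2)%nat by lia. rewrite S21; lra.
  - intros i Hi. destruct (Nat.lt_ge_cases i k1) as [Hlt|Hge].
    + rewrite !join_pts_l; try lia. have := S1m i Hlt; lra.
    + rewrite !join_pts_r; try lia; auto. have -> : (S i - k1 = S (i - k1))%nat by lia.
      have := S2m (i - k1)%nat ltac:(lia). lra.
  - intros i Hi. destruct (Nat.ltb_spec i k1) as [Hlt|Hge].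
    + rewrite !join_pts_l; try lia. destruct (S1c i Hlt) as [Hc Hr]. split; auto. intros t Ht.
      have := incr_le s1 k1 S1m (S i) k1 ltac:(lia). rewrite S11 => Hs.
      rewrite concat_l; [|lra]. apply Hr; lra.
    + rewrite !join_pts_r; try lia; auto. have -> : (S i - k1 = S (i - k1))%nat by lia.
      destruct (S2c (i - k1)%nat ltac:(lia)) as [Hc Hr]. split; auto. intros t Ht.
      have : 0 <= s2 (i - k1)%nat by rewrite -S20; apply (incr_le s2 k2 S2m); lia.
      intros H0. rewrite concat_r; [|lra]. apply Hr; lra.
Qed.

(** * Continuous induction on [[0, 1]]

    This replaces connectedness of
    [[0, 1]] in the proof that [gamma] only needs simplicial witnesses. *)

Lemma left_closed (S : R -> Prop) t : 0 < t ->
  (exists d, 0 < d /\ forall t', 0 < t' < 1 -> Rabs (t' - t) < d -> S t' -> S t) ->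
  (forall v, 0 < v < t -> S v) -> t <= 1 -> S t.
Proof.
  intros Ht [d [Hd Hd']] Hleft Ht1. set v := Rmax (t / 2) (t - d / 2).
  have Hv : t / 2 <= v /\ t - d / 2 <= v /\ v < t
    by split; [apply Rmax_l|split; [apply Rmax_r|apply Rmax_lub_lt; lra]].
  apply (Hd' v); [lra|rewrite Rabs_left; lra|apply Hleft; lra].
Qed.

Lemma continuous_induction (S : R -> Prop) :
  (exists d, 0 < d /\ forall t, 0 < t < d -> t < 1 -> S t) ->
  (forall t, 0 < t <= 1 ->
     exists d, 0 < d /\ forall t', 0 < t' < 1 -> Rabs (t' - t) < d -> S t' -> S t) ->
  (forall t, 0 < t < 1 -> S t ->
     exists d, 0 < d /\ forall t', 0 < t' < 1 -> Rabs (t' - t) < d -> S t') ->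
  S 1.
Proof.
  intros [da [Hda Hstart]] Hclosed Hopen.
  set A := fun u => u <= 1 /\ forall v, 0 < v <= u -> v < 1 -> S v.
  have HA0 : A 0 by split; [lra|intros; lra].
  have HAb : bound A by exists 1; intros u [Hu _]; exact Hu.
  destruct (completeness A HAb (ex_intro _ 0 HA0)) as [T [HT1 HT2]].
  have HT1' : T <= 1 by apply HT2; intros u [Hu _]; exact Hu.
  have Hbelow : forall v, 0 < v < T -> S v.
  { intros v Hv. apply NNPP; intros Hn. have : T <= v; [|lra].
    apply HT2. intros a [_ Ha]. destruct (Rle_lt_dec a v) as [|Hlt]; auto.
    exfalso; apply Hn, Ha; lra. }
  have HTpos : 0 < T.
  { set u := Rmin (da / 2) (1 / 2).
    have Hu1 : u <= da / 2 := Rmin_l _ _. have Hu2 : u <= 1 / 2 := Rmin_r _ _.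
    have Hu0 : 0 < u by apply Rmin_glb_lt; lra.
    have HAu : A u by split; [lra|intros v Hv Hv1; apply Hstart; lra].
    have := HT1 u HAu; lra. }
  (* if [T < 1], then [S T], and openness pushes [S] beyond [T] *)
  have HT : T = 1.
  { apply NNPP; intros HTn.
    have HST : S T by apply left_closed; [exact HTpos|apply Hclosed; lra|exact Hbelow|exact HT1'].
    destruct (Hopen T ltac:(lra) HST) as [dc [Hdc Hdc']].
    set r := Rmin dc (1 - T).
    have Hr1 : r <= dc := Rmin_l _ _. have Hr2 : r <= 1 - T := Rmin_r _ _.
    have Hr0 : 0 < r by apply Rmin_glb_lt; lra.
    have HAu : A (T + r / 2).
    { split; [lra|]. intros w Hw Hw1. destruct (Rtotal_order w T) as [Hlt|[->|Hgt]].
      - apply Hbelow; lra.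
      - exact HST.
      - apply Hdc'; [lra|rewrite Rabs_right; lra]. }
    have := HT1 _ HAu; lra. }
  rewrite HT in Hbelow. apply left_closed; [lra|apply Hclosed; lra|exact Hbelow|lra].
Qed.

(** * Semantics of SLCS on the complex *)

Variable AP : finType.
Variable V : AP -> Pt -> Prop.
Hypothesis HV : coherent K V.

Notation sat := (sat K V).

Definition cell_invariant (f : form AP) : Prop :=
  forall c x y, is_cell K c -> relint c x -> relint c y -> sat x f -> sat y f.

Definition Reach (f : form AP) (x p : Pt) : Prop :=
  exists sigma, simplicial_path K sigma /\ sigma 0 = x /\ sigma 1 = p /\
    forall t, 0 < t < 1 -> sat (sigma t) f.

Lemma reach_seg f x d q : cell_invariant f -> is_cell K d -> hull d x -> relint d q ->
  sat q f -> Reach f x q.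
Proof.
  intros Hf Hd Hdx Hdq Hq. exists (seg x q).
  split; [exact (proj1 (seg_spath d x q Hd Hdx Hdq))|split; [apply seg_0|split; [apply seg_1|]]].
  intros t Ht. apply (Hf d q); auto. apply relint_seg; auto; lra.
Qed.

Lemma reach_extend f x p q : Reach f x p -> sat p f -> simplicial_path K (seg p q) ->
  (forall t, 0 < t < 1 -> sat (seg p q t) f) -> Reach f x q.
Proof.
  intros [sg [Hs [H0 [H1 Hi]]]] Hp Hseg Hsegf.
  exists (concat sg (seg p q)). split; [apply concat_spath; auto; rewrite seg_0; auto|].
  split; [rewrite concat_0; auto|split; [rewrite concat_1 seg_1; auto|]].
  apply (concat_interior _ _ (fun z => sat z f)); auto. rewrite H1; auto.
Qed.

Lemma reach_into_cell f x p d q : cell_invariant f -> Reach f x p -> sat p f ->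
  is_cell K d -> hull d p -> relint d q -> sat q f -> Reach f x q.
Proof.
  intros Hf HR Hp Hd Hdp Hdq Hq. apply (reach_extend f x p); auto.
  - exact (proj1 (seg_spath d p q Hd Hdp Hdq)).
  - intros t Ht. apply (Hf d q); auto. apply relint_seg; auto; lra.
Qed.

Lemma reach_out_of_cell f x p d q : cell_invariant f -> Reach f x q -> sat q f ->
  is_cell K d -> hull d p -> relint d q -> Reach f x p.
Proof.
  intros Hf HR Hq Hd Hdp Hdq. apply (reach_extend f x q); auto.
  - exact (proj2 (seg_spath d p q Hd Hdp Hdq)).
  - intros t Ht. apply (Hf d q); auto. apply seg_relint_rev; auto; lra.
Qed.

(** A [gamma] witness can be replaced by a simplicial one: the set of times
    [t] such that [pi t] is reachable is, by the star property, closed from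
    the left and open, so [continuous_induction] applies. *)
Lemma gamma_simplicial f g x : cell_invariant f -> sat x (FGamma f g) ->
  exists sigma, simplicial_path K sigma /\ sigma 0 = x /\
    (forall t, 0 < t < 1 -> sat (sigma t) f) /\ sat (sigma 1) g.
Proof.
  intros Hf [pi [Hpi [Hpi0 [Hpif Hpig]]]].
  have Hreach : Reach f x (pi 1).
  { apply (continuous_induction (fun t => Reach f x (pi t))).
    - destruct (path_star pi 0 Hpi ltac:(lra)) as [d [Hd Hstar]]. exists d; split; auto.
      intros t Ht Ht1.
      destruct (Hstar t ltac:(lra) ltac:(rewrite Rminus_0_r Rabs_right; lra)) as [c [Hc [Hct Hcx]]].
      rewrite Hpi0 in Hcx. apply (reach_seg f x c); auto. apply Hpif; lra.
    - intros t Ht. destruct (path_star pi t Hpi ltac:(lra)) as [d [Hd Hstar]]. exists d; split; auto.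
      intros t' Ht' Htt HR. destruct (Hstar t' ltac:(lra) Htt) as [c [Hc [Hct' Hct]]].
      apply (reach_out_of_cell f x (pi t) c (pi t')); auto.
    - intros t Ht HR. destruct (path_star pi t Hpi ltac:(lra)) as [d [Hd Hstar]]. exists d; split; auto.
      intros t' Ht' Htt. destruct (Hstar t' ltac:(lra) Htt) as [c [Hc [Hct' Hct]]].
      apply (reach_into_cell f x (pi t) c (pi t')); auto. }
  destruct Hreach as [sg [Hs [H0 [H1 Hi]]]].
  exists sg. split; [auto|split; [auto|split; [auto|rewrite H1; auto]]].
Qed.

Lemma box_failure f y : polyhedron K y -> ~ sat y (FBox f) ->
  exists d z, is_cell K d /\ hull d y /\ relint d z /\ ~ sat z f.
Proof.
  intros Hy Hn. destruct (star_nbhd y Hy) as [e [He Hstar]].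
  have [z [Hz [Hzy Hzf]]] : exists z, polyhedron K z /\ close z y e /\ ~ sat z f.
  { apply NNPP; intros Hno. apply Hn. split; auto. exists e; split; auto.
    intros z Hz Hzy. apply NNPP; intros Hzf. apply Hno; exists z; auto. }
  destruct (Hstar z Hz Hzy) as [d [Hd [Hdz Hdy]]]. exists d, z; auto.
Qed.

(** [Box f] is cell invariant: a violating point [z] near [y] lies in a cell
    [d] whose closure contains the cell of [x] and [y]; points of the segment
    from [x] to [z] close to [x] lie in [d], so they violate [f] too. *)
Lemma box_cell_invariant f : cell_invariant f -> cell_invariant (FBox f).
Proof.
  intros Hf c x y Hc Hx Hy [_ [ex [Hex Hin]]].
  apply NNPP; intros Hn.
  destruct (box_failure f y (relint_poly c y (proj1 Hc) Hy) Hn) as [d [z [Hd [Hdy [Hdz Hzf]]]]].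
  have Hdx : hull d x
    := hull_incl c d x (face_incl c d y (proj1 Hc) (proj1 Hd) Hy Hdy) (relint_hull _ _ Hx).
  destruct (seg_near x z ex Hex) as [t0 [Ht0 Hnear]].
  have Hrel : relint d (seg x z t0) := relint_seg d x z t0 Hdx Hdz Ht0.
  apply Hzf, (Hf d (seg x z t0) z Hd Hrel Hdz).
  apply Hin; [exact (relint_poly d _ (proj1 Hd) Hrel)|exact Hnear].
Qed.

(** [gamma f g] is cell invariant: from [y], go straight to a point [pi t0]
    of the witness near [x] (in a cell whose closure contains [x] and [y]),
    then follow the rest of the witness. *)
Lemma gamma_cell_invariant f g : cell_invariant f -> cell_invariant (FGamma f g).
Proof.
  intros Hf c x y Hc Hx Hy [pi [Hpi [Hpi0 [Hpif Hpig]]]].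
  destruct (path_star pi 0 Hpi ltac:(lra)) as [dl [Hdl Hstar]].
  set t0 := Rmin (dl / 2) (1 / 2).
  have Ht1 : t0 <= dl / 2 := Rmin_l _ _. have Ht2 : t0 <= 1 / 2 := Rmin_r _ _.
  have Ht0 : 0 < t0 by apply Rmin_glb_lt; lra.
  destruct (Hstar t0 ltac:(lra) ltac:(rewrite Rminus_0_r Rabs_right; lra)) as [d [Hd [Hdq Hdx]]].
  rewrite Hpi0 in Hdx.
  have Hdy : hull d y
    := hull_incl c d y (face_incl c d x (proj1 Hc) (proj1 Hd) Hx Hdx) (relint_hull _ _ Hy).
  have Hq : sat (pi t0) f by apply Hpif; lra.
  destruct (reach_seg f y d (pi t0) Hf Hd Hdy Hdq Hq) as [sg [Hsg [Hsg0 [Hsg1 Hsgf]]]].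
  exists (concat sg (tail pi t0)). split; [|split; [|split]].
  - apply concat_path; [apply Hsg|apply tail_path; auto; lra|rewrite Hsg1 tail_0; reflexivity].
  - by rewrite concat_0.
  - apply (concat_interior _ _ (fun z => sat z f)); [auto|rewrite Hsg1; auto|].
    intros t Ht. apply Hpif. nra.
  - by rewrite concat_1 tail_1.
Qed.

Lemma formula_cell_invariant (phi : form AP) : cell_invariant phi.
Proof.
  induction phi as [|p|f IHf|f IHf g IHg|f IHf|f IHf g IHg].
  - intros c x y _ _ _ _; exact I.
  - intros c x y Hc Hx Hy Hp. destruct (HV p x Hp) as [s [Hs [Hsx Hs']]].
    apply Hs', (cell_unique c s x y); auto; [apply Hc|apply Hs].
  - intros c x y Hc Hx Hy Hn Hfy. apply Hn, (IHf c y x); auto.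
  - intros c x y Hc Hx Hy [Hfx Hgx]. split; [apply (IHf c x y)|apply (IHg c x y)]; auto.
  - exact (box_cell_invariant f IHf).
  - exact (gamma_cell_invariant f g IHf).
Qed.

Lemma simplicial_bisim_inverse Rel :
  simplicial_bisim K V Rel -> simplicial_bisim K V (fun y x => Rel x y).
Proof.
  intros Hb y x Hxy. destruct (Hb x y Hxy) as [Hat [Hfwd Hbwd]].
  split; [intros p; symmetry; apply Hat|split].
  - intros piy Hpy Hpy0. destruct (Hbwd piy Hpy Hpy0) as [pix [Hpx [Hpx0 HR]]]. exists pix; auto.
  - intros pix Hpx Hpx0. destruct (Hfwd pix Hpx Hpx0) as [piy [Hpy [Hpy0 HR]]]. exists piy; auto.
Qed.

(** Transfer of [Box f] along a bisimulation, assuming it preserves [f]: a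
    violating cell [d] at [y] yields a simplicial segment from [y] into [d];
    its matching path from [x] starts inside the [f]-neighbourhood of [x],
    so the segment satisfies [f] at some point of [d], contradicting cell
    invariance. *)
Lemma box_transfer Rel f : simplicial_bisim K V Rel ->
  (forall x y, Rel x y -> (sat x f <-> sat y f)) ->
  forall x y, Rel x y -> polyhedron K y -> sat x (FBox f) -> sat y (FBox f).
Proof.
  intros Hb Hf x y Hxy Hy [_ [ex [Hex Hin]]]. apply NNPP; intros Hn.
  destruct (box_failure f y Hy Hn) as [d [z [Hd [Hdy [Hdz Hzf]]]]].
  destruct (proj2 (proj2 (Hb x y Hxy)) (seg y z) (proj1 (seg_spath d y z Hd Hdy Hdz)) (seg_0 y z))
    as [pix [[[Hpix_in Hpix_cont] _] [Hpix0 HR]]].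
  destruct (Hpix_cont 0 ltac:(lra) ex Hex) as [dl [Hdl Hnear]].
  set t := Rmin (dl / 2) 1.
  have Ht1 : t <= dl / 2 := Rmin_l _ _. have Ht2 : t <= 1 := Rmin_r _ _.
  have Ht0 : 0 < t by apply Rmin_glb_lt; lra.
  have Hft : sat (pix t) f.
  { apply Hin; [apply Hpix_in; lra|]. rewrite -Hpix0.
    apply Hnear; [lra|rewrite Rminus_0_r Rabs_right; lra]. }
  apply Hzf, (formula_cell_invariant f d (seg y z t) z Hd); [apply relint_seg; auto; lra|auto|].
  apply (Hf _ _ (HR t ltac:(lra))); exact Hft.
Qed.

(** Transfer of [gamma f g]: take a simplicial witness at [x] and its
    matching path from [y]. *)
Lemma gamma_transfer Rel f g : simplicial_bisim K V Rel ->
  (forall x y, Rel x y -> (sat x f <-> sat y f)) -> (forall x y, Rel x y -> (sat x g <-> sat y g)) ->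
  forall x y, Rel x y -> sat x (FGamma f g) -> sat y (FGamma f g).
Proof.
  intros Hb Hf Hg x y Hxy Hx.
  destruct (gamma_simplicial f g x (formula_cell_invariant f) Hx) as [sg [Hs [H0 [Hi H1]]]].
  destruct (proj1 (proj2 (Hb x y Hxy)) sg Hs H0) as [piy [Hpy [Hpy0 HR]]].
  exists piy. split; [apply Hpy|split; [auto|split]].
  - intros t Ht. apply (Hf _ _ (HR t ltac:(lra))), Hi; auto.
  - apply (Hg _ _ (HR 1 ltac:(lra))); auto.
Qed.

Lemma bisim_logical_equiv Rel :
  (forall x y, Rel x y -> polyhedron K x /\ polyhedron K y) -> simplicial_bisim K V Rel ->
  forall phi x y, Rel x y -> (sat x phi <-> sat y phi).
Proof.
  intros HRel Hb. have Hb' := simplicial_bisim_inverse Rel Hb.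
  induction phi as [|p|f IHf|f IHf g IHg|f IHf|f IHf g IHg]; intros x y Hxy.
  - reflexivity.
  - exact (proj1 (Hb x y Hxy) p).
  - have := IHf x y Hxy. simpl; tauto.
  - have := IHf x y Hxy. have := IHg x y Hxy. simpl; tauto.
  - have IHf' : forall y x, Rel x y -> (sat y f <-> sat x f) by intros; symmetry; auto.
    split; [apply (box_transfer Rel)|apply (box_transfer (fun y x => Rel x y))]; auto;
      apply (HRel x y Hxy).
  - have IHf' : forall y x, Rel x y -> (sat y f <-> sat x f) by intros; symmetry; auto.
    have IHg' : forall y x, Rel x y -> (sat y g <-> sat x g) by intros; symmetry; auto.
    split; [apply (gamma_transfer Rel)|apply (gamma_transfer (fun y x => Rel x y))]; auto.
Qed.

End PolyhedralLogic.

Theorem mainTheorem14 (m : nat) (AP : finType) (K : list (simplex m))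
  (V : AP -> Point m -> Prop)
  (HK : simplicial_complex K) (HV : coherent K V)
  (Rel : Point m -> Point m -> Prop)
  (HRel : forall x y, Rel x y -> polyhedron K x /\ polyhedron K y)
  (Hbisim : simplicial_bisim K V Rel) :
  forall x y, Rel x y -> forall phi : form AP, sat K V x phi <-> sat K V y phi.
Proof.
  intros x y Hxy phi.
  exact (bisim_logical_equiv m K HK AP V HV Rel HRel Hbisim phi x y Hxy).
Qed.
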